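(* Let $\omega\in\mathcal{M}_W$ and $\sigma>0$. There exist positive constants $c_{\sigma,\omega},C_{\sigma,\omega}$ such that for all $\phi$ on $\mathbb{R}^2$, \[ c_{\sigma,\omega}^{-1}\|\phi\|_{\dot H^\sigma_\omega\cap L^2_\omega}\le\|\phi\|_{\dot H^\sigma_\omega}+\|\phi\|_{L^2}\le c_{\sigma,\omega}\|\phi\|_{\dot H^\sigma_\omega\cap L^2_\omega}, \] \[ C_{\sigma,\omega}^{-1}\|\phi\|_{H^\sigma_\omega}\le\|\phi\|_{\dot H^\sigma_\omega}+\|\phi\|_{L^2}\le C_{\sigma,\omega}\|\phi\|_{H^\sigma_\omega}. \]
   Context: $\|f\|_{\dot H^\sigma_\omega}=\||\xi|^\sigma\omega(|\xi|)\hat f\|_{L^2}$, $\|f\|_{H^\sigma_\omega}=\|(1+|\xi|^2)^{\sigma/2}\omega(|\xi|)\hat f\|_{L^2}$, $L^2_\omega=H^0_\omega$, $\|f\|_{X\cap Y}=(\|f\|_X^2+\|f\|_Y^2)^{1/2}$. (O1) $w\in C^1([0,\infty))$, $w>0$, $w'\ge0$; (O2) $rw'(r)\le Cw(r)$ for all $r\ge0$; (O3) $w(r_1r_2)\le C(w(r_1)+w(r_2))$ for all $r_1,r_2\ge0$. $\mathcal{M}_W$ is the set of quotients $\omega_a/\omega_b$ with $\omega_a,\omega_b$ satisfying (O1)–(O3). *)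

From HB Require Import structures.
From mathcomp Require Import all_boot all_order all_algebra.
From mathcomp Require Import all_classical all_reals all_analysis.
Set Implicit Arguments. Unset Strict Implicit. Unset Printing Implicit Defensive.
Import Order.TTheory GRing.Theory Num.Theory numFieldNormedType.Exports.
Local Open Scope classical_set_scope.
Local Open Scope ring_scope.

Section Defs.
Context {R : realType}.

(* (O1): w in C^1([0,oo)), w > 0, w' >= 0.  [dw] is the derivative of [w] on
   [0,oo): the two-sided derivative at r > 0 and the right derivative at 0;
   it is continuous on [0,oo). *)
Definition is_C1_deriv_on_nonneg (w dw : R -> R) : Prop :=
  {within `[0, +oo[, continuous dw} /\
  (forall r : R, 0 < r -> is_derive r 1 w (dw r)) /\
  ((fun h : R => h^-1 * (w h - w 0)) @ 0^'+ --> dw 0).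

Definition O1 (w : R -> R) (dw : R -> R) : Prop :=
  is_C1_deriv_on_nonneg w dw /\
  (forall r : R, 0 <= r -> 0 < w r) /\
  (forall r : R, 0 <= r -> 0 <= dw r).

Definition O2 (w dw : R -> R) : Prop :=
  exists C : R, forall r : R, 0 <= r -> r * dw r <= C * w r.

Definition O3 (w : R -> R) : Prop :=
  exists C : R, forall r1 r2 : R, 0 <= r1 -> 0 <= r2 ->
    w (r1 * r2) <= C * (w r1 + w r2).

Definition admissible_weight (w : R -> R) : Prop :=
  exists dw : R -> R, [/\ O1 w dw, O2 w dw & O3 w].

(* M_W : quotients omega_a / omega_b of weights satisfying (O1)-(O3)
   (only the values on [0,oo) matter). *)
Definition in_MW (omega : R -> R) : Prop :=
  exists wa wb : R -> R, [/\ admissible_weight wa, admissible_weight wb &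
    forall r : R, 0 <= r -> omega r = wa r / wb r].

Definition leb2 := (@lebesgue_measure R \x @lebesgue_measure R)%E.

Definition eucl_norm (xi : R * R) : R := Num.sqrt (xi.1 ^+ 2 + xi.2 ^+ 2).

(* For a function phi on R^2 with Fourier transform [phihat],
   ||phi||_{Hdot^sigma_omega} = || |xi|^sigma omega(|xi|) phihat ||_{L^2}. *)
Definition hom_norm (sigma : R) (omega : R -> R) (phihat : R * R -> R)
  : \bar R :=
  Lnorm leb2 2%:E
    (fun xi => ((eucl_norm xi) `^ sigma * omega (eucl_norm xi) * phihat xi)%:E).

Definition inhom_norm (sigma : R) (omega : R -> R) (phihat : R * R -> R)
  : \bar R :=
  Lnorm leb2 2%:E
    (fun xi => ((1 + eucl_norm xi ^+ 2) `^ (sigma / 2) * omega (eucl_norm xi)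
                 * phihat xi)%:E).

Definition L2w_norm (omega : R -> R) (phihat : R * R -> R) : \bar R :=
  inhom_norm 0 omega phihat.

Definition L2_norm (phihat : R * R -> R) : \bar R :=
  inhom_norm 0 (fun _ => 1) phihat.

Definition cap_norm (a b : \bar R) : \bar R :=
  ((a `^ 2 + b `^ 2) `^ (2^-1))%E.

End Defs.

From HB Require Import structures.
From mathcomp Require Import all_boot all_order all_algebra.
From mathcomp Require Import all_classical all_reals all_analysis.
From mathcomp Require Import lra ring measurable_realfun.
Import Order.TTheory GRing.Theory Num.Theory numFieldNormedType.Exports.
Set Implicit Arguments.
Unset Strict Implicit.
Unset Printing Implicit Defensive.
Local Open Scope classical_set_scope.
Local Open Scope ring_scope.

(* The four norms are L^2(R^2) norms of phihat against the radial weights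
   |xi|^sigma omega, (1 + |xi|^2)^(sigma/2) omega, omega and 1, so every
   inequality reduces to a pointwise comparison of weights, Minkowski's
   inequality, and max(a, b) <= (a^2 + b^2)^(1/2) <= a + b.  The pointwise
   comparisons only use that omega is positive, bounded on [0, 1] and bounded
   below by 1 / (M (1 + r^sigma)).  The lower bound holds because in
   omega = wa / wb the numerator is at least wa 0 > 0, while a weight w
   satisfying (O1) and (O3) grows slower than every power: (O3) gives
   w r <= 2C w (sqrt r), and taking square roots down to a fixed r0 with
   r0^(sigma/2) >= 2C pays each factor 2C with a factor (sqrt r)^sigma of
   r^sigma. *)

Section real_facts.
Context {R : realType}.

Lemma powR_ge1 (r s : R) : 1 <= r -> 0 <= s -> 1 <= r `^ s.
Proof. by move=> r_ge1 s_ge0; rewrite -(powRr0 r) ler_powR. Qed.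

Lemma sqr_powR_half (r s : R) : 0 <= r -> (r ^+ 2) `^ (s / 2) = r `^ s.
Proof.
move=> r_ge0; rewrite -powR_mulrn // -powRrM; congr (_ `^ _).
by rewrite mulrC -mulrA mulVf ?mulr1.
Qed.

Lemma powR_le_powR_1Dsqr (r s : R) : 0 <= r -> 0 <= s ->
  r `^ s <= (1 + r ^+ 2) `^ (s / 2).
Proof.
move=> r_ge0 s_ge0; rewrite -sqr_powR_half //.
by apply: ge0_ler_powR; rewrite ?nnegrE ?addr_ge0 ?sqr_ge0 ?divr_ge0 ?lerDr.
Qed.

Lemma powR_1Dsqr_ge1 (r s : R) : 0 <= s -> 1 <= (1 + r ^+ 2) `^ (s / 2).
Proof. by move=> s_ge0; apply: powR_ge1; rewrite ?lerDl ?sqr_ge0 ?divr_ge0. Qed.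

Lemma powR_1Dsqr_le (r s : R) : 0 <= r -> 0 <= s ->
  (1 + r ^+ 2) `^ (s / 2) <= 2 `^ (s / 2) * (1 + r `^ s).
Proof.
move=> r_ge0 s_ge0; have s2_ge0 : 0 <= s / 2 by rewrite divr_ge0.
have [r_le1|r_gt1] := leP r 1.
  apply: (@le_trans _ _ (2 `^ (s / 2))).
    apply: ge0_ler_powR; rewrite ?nnegrE ?addr_ge0 ?sqr_ge0 //.
    by rewrite lerD2l expr_le1.
  by rewrite ler_peMr ?powR_ge0 // lerDl powR_ge0.
rewrite (@le_trans _ _ ((2 * r ^+ 2) `^ (s / 2))) //.
  apply: ge0_ler_powR; rewrite ?nnegrE ?addr_ge0 ?mulr_ge0 ?sqr_ge0 //.
  by rewrite mulr2n mulrDl mul1r lerD2r expr_ge1 // ltW.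
by rewrite powRM ?sqr_ge0 // sqr_powR_half // ler_wpM2l ?powR_ge0 // lerDr.
Qed.

End real_facts.

Section sqrt_doubling.
Context {R : realType}.
Variables (f : R -> R) (D sigma : R).
Hypotheses (sigma_gt0 : 0 < sigma) (f_gt0 : forall r, 1 <= r -> 0 < f r)
  (f_nd : forall x y, 1 <= x -> x <= y -> f x <= f y)
  (f_doubling : forall r, 1 <= r -> f r <= D * f (Num.sqrt r)).

Let D_gt0 : 0 < D.
Proof.
have := f_doubling (lexx 1); rewrite sqrtr1 -[leLHS]mul1r ler_pM2r ?f_gt0 //.
exact: lt_le_trans.
Qed.

Lemma sqrt_doubling_le_powR_iter (r0 : R) :
  1 <= r0 -> D <= Num.sqrt r0 `^ sigma ->
  forall n r, 1 <= r -> r <= r0 ^+ (2 ^ n) -> f r <= f r0 * r `^ sigma.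
Proof.
move=> r0_ge1 D_le n; elim: n => [|n IHn] r r_ge1 r_le.
  rewrite expn0 expr1 in r_le.
  rewrite (le_trans (f_nd r_ge1 r_le)) // ler_peMr ?(ltW (f_gt0 r0_ge1)) //.
  exact: powR_ge1 r_ge1 (ltW sigma_gt0).
have [r_le_r0|r0_lt_r] := leP r r0.
  by apply: IHn; rewrite // (le_trans r_le_r0) // -[leLHS]expr1 ler_weXn2l // expn_gt0.
have r_ge0 : 0 <= r by exact: le_trans r_ge1.
have s_ge1 : 1 <= Num.sqrt r by rewrite -sqrtr1 ler_sqrt.
have s_le : Num.sqrt r <= r0 ^+ (2 ^ n).
  rewrite -[leRHS]ger0_norm ?exprn_ge0 ?(le_trans _ r0_ge1) // -sqrtr_sqr.
  by rewrite ler_sqrt ?sqr_ge0 // -exprM -expnSr.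
have powR_sqrt : r `^ sigma = Num.sqrt r `^ sigma * Num.sqrt r `^ sigma.
  by rewrite -powRM ?sqrtr_ge0 // -expr2 sqr_sqrtr.
have D_le_s : D <= Num.sqrt r `^ sigma.
  apply: (le_trans D_le); apply: ge0_ler_powR; rewrite ?nnegrE ?sqrtr_ge0 //.
    exact: ltW.
  by rewrite ler_sqrt // ltW.
rewrite (le_trans (f_doubling r_ge1)) // powR_sqrt.
apply: (le_trans (ler_wpM2l (ltW D_gt0) (IHn _ s_ge1 s_le))); rewrite mulrCA.
apply: ler_wpM2l; first exact: ltW (f_gt0 r0_ge1).
by apply: ler_wpM2r D_le_s; exact: powR_ge0.
Qed.

Lemma sqrt_doubling_le_powR :
  exists2 K, 0 < K & forall r, 1 <= r -> f r <= K * r `^ sigma.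
Proof.
pose r0 := Num.max 2 ((D `^ sigma^-1) ^+ 2).
have r0_ge2 : 2 <= r0 by rewrite le_max lexx.
have r0_ge1 : 1 <= r0 by rewrite (le_trans _ r0_ge2) // ler1n.
have r0_ge0 : 0 <= r0 := le_trans ler01 r0_ge1.
exists (f r0); first exact: f_gt0.
have D_le : D <= Num.sqrt r0 `^ sigma.
  rewrite -{1}(powRr1 (ltW D_gt0)) -(mulVf (lt0r_neq0 sigma_gt0)) powRrM.
  apply: ge0_ler_powR; rewrite ?nnegrE ?powR_ge0 ?sqrtr_ge0 //; first exact: ltW.
  rewrite -[leLHS]ger0_norm ?powR_ge0 // -sqrtr_sqr ler_sqrt //.
  by rewrite le_max lexx orbT.
move=> r r_ge1; pose n := Num.bound r.
have r_lt_n : r < n%:R := archi_boundP (le_trans ler01 r_ge1).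
have n_lt_2n : (n < 2 ^ n)%N := ltn_expl n (ltnSn 1).
apply: (sqrt_doubling_le_powR_iter r0_ge1 D_le r_ge1 (n := n)).
apply: (le_trans (ltW r_lt_n)); apply: (@le_trans _ _ (r0 ^+ n)).
  by rewrite (le_trans (_ : _ <= 2 ^+ n)) ?lerXn2r ?nnegrE // -natrX ler_nat ltnW.
by rewrite ler_weXn2l // ltnW.
Qed.

End sqrt_doubling.

Section admissible_weight.
Context {R : realType}.
Implicit Types (w dw omega : R -> R) (r sigma : R).

Lemma O1_gt0 w dw : O1 w dw -> forall r, 0 <= r -> 0 < w r.
Proof. by case=> _ []. Qed.

Lemma O1_nondecreasing_gt0 w dw : O1 w dw ->
  forall x y, 0 < x -> x <= y -> w x <= w y.
Proof.
move=> [[_ [w_derive _]] [_ dw_ge0]] x y x_gt0 xy.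
have w_derivable r : 0 < r -> derivable w r 1 /\ derive1 w r = dw r.
  move=> r_gt0; have := w_derive r r_gt0.
  by split; [exact: ex_derive | rewrite derive1E derive_val].
apply: (@ger0_derive1_ndecry _ w x) => //.
- move=> r; rewrite in_itv/= andbT => xr.
  exact: (w_derivable r (lt_trans x_gt0 xr)).1.
- move=> r; rewrite in_itv/= => /andP[xr _].
  by rewrite (w_derivable r (lt_trans x_gt0 xr)).2 dw_ge0// ltW// (lt_trans x_gt0 xr).
- apply: derivable_within_continuous => r; rewrite in_itv/= => /andP[xr _].
  exact: (w_derivable r (lt_le_trans x_gt0 xr)).1.
Qed.

Lemma O1_nondecreasing w dw : O1 w dw ->
  forall x y, 0 <= x -> x <= y -> w x <= w y.
Proof.
move=> w_O1 x y; rewrite le_eqVlt => /predU1P[<-|]; last first.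
  exact: O1_nondecreasing_gt0 w_O1 x y.
rewrite le_eqVlt => /predU1P[<-//|y_gt0].
(* At 0, (O1) only controls the right difference quotient: as its limit dw 0
   is nonnegative, w h > w 0 - h > w y for small h > 0, which contradicts
   monotonicity on ]0, +oo[. *)
have [[_ [_ dquot_cvg]] [_ dw_ge0]] := w_O1.
rewrite leNgt; apply/negP => wy_lt_w0.
have dquot_gtN1 : \forall h \near 0^'+, -1 < h^-1 * (w h - w 0).
  exact: cvgr_gt (dw 0) dquot_cvg (-1) (lt_le_trans (ltrN10 R) (dw_ge0 0 (lexx _))).
near (0 : R)^'+ => h.
have h_gt0 : 0 < h by near: h; exact: nbhs_right_gt.
have h_lt_y : h < y by near: h; exact: nbhs_right_lt.
have h_lt : h < w 0 - w y by near: h; apply: nbhs_right_lt; rewrite subr_gt0.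
have wh_le : w h <= w y by exact: O1_nondecreasing_gt0 w_O1 _ _ h_gt0 (ltW h_lt_y).
have : -1 * h < h^-1 * (w h - w 0) * h by rewrite ltr_pM2r //; near: h.
rewrite mulN1r mulrAC mulVf ?gt_eqF // mul1r; lra.
Unshelve. all: by end_near. Qed.

Lemma O3_sqrt_doubling w : O3 w ->
  exists D, forall r, 0 <= r -> w r <= D * w (Num.sqrt r).
Proof.
move=> [C w_O3]; exists (C + C) => r r_ge0.
have := w_O3 _ _ (sqrtr_ge0 r) (sqrtr_ge0 r).
by rewrite -expr2 sqr_sqrtr // mulrDl -mulrDr.
Qed.

Lemma admissible_weight_le_powR w sigma : admissible_weight w -> 0 < sigma ->
  exists2 B, 0 < B & forall r, 0 <= r -> w r <= B * (1 + r `^ sigma).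
Proof.
move=> [dw [w_O1 _ /O3_sqrt_doubling[D w_doubling]]] sigma_gt0.
have w_gt0 := O1_gt0 w_O1; have w_nd := O1_nondecreasing w_O1.
have [|||K K_gt0 w_le] := @sqrt_doubling_le_powR _ w D sigma sigma_gt0.
- by move=> r r_ge1; apply: w_gt0; exact: le_trans r_ge1.
- by move=> x y x_ge1; apply: w_nd; exact: le_trans x_ge1.
- by move=> r r_ge1; apply: w_doubling; exact: le_trans r_ge1.
have w1_gt0 := w_gt0 1 ler01.
exists (w 1 + K); first exact: addr_gt0.
move=> r r_ge0; have P_ge0 := powR_ge0 r sigma.
have : w r <= w 1 + K * r `^ sigma.
  have [r_le1|r_gt1] := leP r 1.
    by rewrite (le_trans (w_nd _ _ r_ge0 r_le1)) // lerDl mulr_ge0 // ltW.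
  by rewrite (le_trans (w_le _ (ltW r_gt1))) // lerDr ltW.
nra.
Qed.

Lemma in_MW_gt0 omega : in_MW omega -> forall r, 0 <= r -> 0 < omega r.
Proof.
move=> [wa [wb [[dwa [wa_O1 _ _]] [dwb [wb_O1 _ _]] omegaE]]] r r_ge0.
by rewrite omegaE // divr_gt0 // (O1_gt0 wa_O1, O1_gt0 wb_O1).
Qed.

Lemma in_MW_bounded omega : in_MW omega ->
  exists2 U, 0 < U & forall r, 0 <= r -> r <= 1 -> omega r <= U.
Proof.
move=> [wa [wb [[dwa [wa_O1 _ _]] [dwb [wb_O1 _ _]] omegaE]]].
have [wa_gt0 wb_gt0] := (O1_gt0 wa_O1, O1_gt0 wb_O1).
exists (wa 1 / wb 0); first by rewrite divr_gt0 ?wa_gt0 ?wb_gt0.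
move=> r r_ge0 r_le1; rewrite omegaE //; apply: ler_pM.
- exact: ltW (wa_gt0 _ r_ge0).
- by rewrite invr_ge0 ltW // wb_gt0.
- exact: O1_nondecreasing wa_O1 _ _ r_ge0 r_le1.
by rewrite lef_pV2 ?posrE ?wb_gt0 // (O1_nondecreasing wb_O1).
Qed.

Lemma in_MW_ge_inv_powR omega sigma : in_MW omega -> 0 < sigma ->
  exists2 M, 0 < M & forall r, 0 <= r -> 1 <= M * (1 + r `^ sigma) * omega r.
Proof.
move=> [wa [wb [[dwa [wa_O1 _ _]] wb_adm omegaE]]] sigma_gt0.
have [B B_gt0 wb_le] := admissible_weight_le_powR wb_adm sigma_gt0.
have [dwb [wb_O1 _ _]] := wb_adm.
have wa0_gt0 := O1_gt0 wa_O1 (lexx 0).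
exists (B / wa 0); first exact: divr_gt0.
move=> r r_ge0; rewrite omegaE //.
have wb_gt0 := O1_gt0 wb_O1 r_ge0.
have wa_ge := O1_nondecreasing wa_O1 (lexx 0) r_ge0.
have -> : B / wa 0 * (1 + r `^ sigma) * (wa r / wb r) =
    B * (1 + r `^ sigma) * wa r / (wa 0 * wb r).
  by field; rewrite !gt_eqF.
rewrite ler_pdivlMr ?mulr_gt0 // mul1r [leRHS]mulrC.
by apply: ler_pM; [exact: ltW | exact: ltW | | exact: wb_le].
Qed.

Lemma O1_measurable_comp d (T : measurableType d) w dw (g : T -> R) :
  O1 w dw -> measurable_fun setT g -> (forall x, 0 <= g x) ->
  measurable_fun setT (fun x => w (g x)).
Proof.
move=> w_O1 mg g_ge0.
(* w is only monotone on [0, +oo[, while w (max r 0) is monotone on R. *)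
have -> : (fun x => w (g x)) = (fun r => w (Num.max r 0)) \o g.
  by apply: funext => x /=; rewrite max_l.
apply: measurableT_comp mg; apply: nondecreasing_measurable => // x y xy.
apply: (O1_nondecreasing w_O1); first by rewrite le_max lexx orbT.
by rewrite ge_max !le_max xy lexx !orbT.
Qed.

Lemma in_MW_measurable_comp d (T : measurableType d) omega (g : T -> R) :
  in_MW omega -> measurable_fun setT g -> (forall x, 0 <= g x) ->
  measurable_fun setT (fun x => omega (g x)).
Proof.
move=> [wa [wb [[dwa [wa_O1 _ _]] [dwb [wb_O1 _ _]] omegaE]]] mg g_ge0.
have -> : (fun x => omega (g x)) = (fun x => wa (g x) * wb (g x) `^ (-1)).
  by apply: funext => x; rewrite omegaE // powR_inv1 // ltW // (O1_gt0 wb_O1).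
apply: measurable_funM; first exact: O1_measurable_comp wa_O1 mg g_ge0.
exact: measurableT_comp (measurable_powR _) (O1_measurable_comp wb_O1 mg g_ge0).
Qed.

End admissible_weight.

Section Lnorm_EFin.
Context d (T : measurableType d) (R : realType) (mu : {measure set T -> \bar R}).
Local Notation "'N_ p [ f ]" := (Lnorm mu p%:E (fun x => (f x)%:E)).
Implicit Types (p k : R) (f g h : T -> R).
Local Open Scope ereal_scope.

Let Lnorm_EFinE p f : 'N_p[f] = (\int[mu]_x (`|f x| `^ p)%:E) `^ p^-1.
Proof. by rewrite unlock. Qed.

Let measurable_powR_norm p f : measurable_fun setT f ->
  measurable_fun setT (fun x => (`|f x| `^ p)%:E).
Proof.
move=> mf; apply/measurable_EFinP.
apply: measurableT_comp (measurable_powR p) _.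
exact: measurableT_comp (@normr_measurable R setT) mf.
Qed.

Let integral_powR_norm_ge0 p f : 0 <= \int[mu]_x (`|f x| `^ p)%:E.
Proof. by apply: integral_ge0 => x _; rewrite lee_fin powR_ge0. Qed.

Lemma le_Lnorm_EFin p f g : (0 < p)%R ->
  measurable_fun setT f -> measurable_fun setT g ->
  (forall x, `|f x| <= `|g x|)%R -> 'N_p[f] <= 'N_p[g].
Proof.
move=> p_gt0 mf mg fg; rewrite !Lnorm_EFinE.
apply: gt0_ler_poweR; rewrite ?in_itv/= ?leey ?integral_powR_norm_ge0 //.
  by rewrite invr_ge0 ltW.
apply: ge0_le_integral; rewrite //; try exact: measurable_powR_norm.
move=> x _; rewrite lee_fin; apply: ge0_ler_powR => //; exact: ltW.
Qed.

Lemma Lnorm_EFinZ p k f : (0 < p)%R -> (0 <= k)%R -> measurable_fun setT f ->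
  'N_p[(fun x => k * f x)] = k%:E * 'N_p[f].
Proof.
move=> p_gt0 k_ge0 mf; rewrite !Lnorm_EFinE.
under eq_integral do rewrite normrM powRM // ger0_norm // EFinM.
rewrite ge0_integralZl_EFin ?powR_ge0 //; last exact: measurable_powR_norm.
rewrite poweRM ?lee_fin ?powR_ge0 ?integral_powR_norm_ge0 //.
by rewrite poweR_EFin -powRrM mulfV ?gt_eqF ?powRr1.
Qed.

Lemma Lnorm_EFin_norm p f : 'N_p[(fun x => `|f x|)] = 'N_p[f].
Proof. by rewrite !Lnorm_EFinE; under eq_integral do rewrite normr_id. Qed.

Lemma le_Lnorm_EFin_scale p k h f : (0 < p)%R -> (0 <= k)%R ->
  measurable_fun setT h -> measurable_fun setT f ->
  (forall x, `|h x| <= k * `|f x|)%R -> 'N_p[h] <= k%:E * 'N_p[f].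
Proof.
move=> p_gt0 k_ge0 mh mf h_le.
have mnf : measurable_fun setT (fun x => `|f x|)%R by exact: measurableT_comp.
rewrite -(Lnorm_EFin_norm p f) -Lnorm_EFinZ //.
apply: le_Lnorm_EFin => //; first exact: measurable_funM.
by move=> x; rewrite (le_trans (h_le x)) // ler_norm.
Qed.

Lemma le_Lnorm_EFin_scaleD p k h f g : (1 <= p)%R -> (0 <= k)%R ->
  measurable_fun setT h -> measurable_fun setT f -> measurable_fun setT g ->
  (forall x, `|h x| <= k * (`|f x| + `|g x|))%R ->
  'N_p[h] <= k%:E * ('N_p[f] + 'N_p[g]).
Proof.
move=> p_ge1 k_ge0 mh mf mg h_le; have p_gt0 := lt_le_trans ltr01 p_ge1.
have mfg : measurable_fun setT (fun x => `|f x| + `|g x|)%R.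
  by apply: measurable_funD; exact: measurableT_comp.
have h_le' x : (`|h x| <= k * `| `|f x| + `|g x| |)%R.
  by rewrite [X in (_ * X)%R]ger0_norm ?addr_ge0 // h_le.
apply: (le_trans (le_Lnorm_EFin_scale p_gt0 k_ge0 mh mfg h_le')).
rewrite lee_wpmul2l ?lee_fin // -(Lnorm_EFin_norm p f) -(Lnorm_EFin_norm p g).
by apply: eminkowski; rewrite ?lee_fin //; exact: measurableT_comp.
Qed.

End Lnorm_EFin.

Lemma lee_scale_trans {R : realType} (x y : \bar R) (a b : R) :
  (x <= a%:E * y)%E -> a <= b -> (0 <= y)%E -> (x <= b%:E * y)%E.
Proof. by move=> /le_trans xy ab y_ge0; apply: xy; rewrite lee_wpmul2r // lee_fin. Qed.

Lemma leeD_scale {R : realType} (x y z : \bar R) (a : R) : 0 <= a -> (0 <= z)%E ->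
  (x <= z)%E -> (y <= a%:E * z)%E -> (x + y <= (1 + a)%:E * z)%E.
Proof.
by move=> a_ge0 z_ge0 xz yz; rewrite EFinD ge0_muleDl ?lee_fin // mul1e leeD.
Qed.

Section cap_norm.
Context {R : realType}.
Local Open Scope ereal_scope.
Implicit Types a b : \bar R.

Lemma cap_normC a b : cap_norm a b = cap_norm b a.
Proof. by rewrite /cap_norm addeC. Qed.

Lemma cap_norm_ge a b : 0 <= a -> 0 <= b -> a <= cap_norm a b.
Proof.
move=> a_ge0 b_ge0; rewrite -[leLHS](poweRe1 a_ge0) -[X in _ `^ X](@mulfV _ 2) //.
rewrite poweRrM; apply: gt0_ler_poweR; rewrite ?in_itv/= ?leey ?andbT.
- by rewrite invr_ge0.
- exact: poweR_ge0.
- exact: adde_ge0 (poweR_ge0 _ _) (poweR_ge0 _ _).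
- exact: leeDl (poweR_ge0 _ _).
Qed.

Lemma cap_norm_le_add a b : 0 <= a -> 0 <= b -> cap_norm a b <= a + b.
Proof.
case: a => [x| |] // a_ge0 b_ge0.
  case: b b_ge0 => [y| |] // b_ge0; last by rewrite addey ?leey.
  move: a_ge0 b_ge0; rewrite /cap_norm !poweR_EFin !lee_fin => x_ge0 y_ge0.
  rewrite -[leRHS](@powRr1 _ (x + y)) ?addr_ge0 // -[in leRHS](@mulfV R 2) // powRrM.
  apply: ge0_ler_powR; rewrite ?nnegrE ?addr_ge0 ?powR_ge0 //.
  rewrite !powR_mulrn ?addr_ge0 //; nra.
by rewrite addye ?leey // gt_eqF // (lt_le_trans _ b_ge0).
Qed.

Lemma add_le_cap_norm a b : 0 <= a -> 0 <= b -> a + b <= 2%:E * cap_norm a b.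
Proof.
move=> a_ge0 b_ge0; rewrite -[2%:E]/(1 + 1) ge0_muleDl // !mul1e.
by rewrite leeD // ?cap_norm_ge // cap_normC cap_norm_ge.
Qed.

End cap_norm.

Section radial_weights.
Context {R : realType}.

Lemma eucl_norm_ge0 (xi : R * R) : 0 <= eucl_norm xi.
Proof. exact: sqrtr_ge0. Qed.

Lemma measurable_eucl_norm : measurable_fun setT (@eucl_norm R).
Proof.
have sqrt_nd : nondecreasing_fun (@Num.sqrt R).
  move=> x y xy; have [x_le0|x_gt0] := leP x 0.
    by rewrite ler0_sqrtr // sqrtr_ge0.
  by rewrite ler_sqrt // (le_trans (ltW x_gt0) xy).
apply: measurableT_comp (nondecreasing_measurable measurableT sqrt_nd) _.
by apply: measurable_funD; apply: measurable_funX;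
  [exact: measurable_fst | exact: measurable_snd].
Qed.

Definition radial_norm (m : R -> R) (phihat : R * R -> R) : \bar R :=
  Lnorm leb2 2%:E (fun xi => (m (eucl_norm xi) * phihat xi)%:E).

Lemma L2w_normE omega phihat : L2w_norm omega phihat = radial_norm omega phihat.
Proof. by apply: eq_Lnorm => xi /=; rewrite mul0r powRr0 mul1r. Qed.

Lemma L2_normE phihat : L2_norm phihat = radial_norm (fun=> 1) phihat.
Proof. by apply: eq_Lnorm => xi /=; rewrite mul0r powRr0 mulr1. Qed.

Variables (phihat : R * R -> R) (k : R).
Hypotheses (mphihat : measurable_fun setT phihat) (k_ge0 : 0 <= k).

Let measurable_radial (m : R -> R) : measurable_fun setT (fun xi => m (eucl_norm xi)) ->
  measurable_fun setT (fun xi => m (eucl_norm xi) * phihat xi).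
Proof. by move=> mm; exact: measurable_funM. Qed.

Lemma radial_norm_le_scale (m m1 : R -> R) :
  measurable_fun setT (fun xi => m (eucl_norm xi)) ->
  measurable_fun setT (fun xi => m1 (eucl_norm xi)) ->
  (forall r, 0 <= r -> `|m r| <= k * `|m1 r|) ->
  (radial_norm m phihat <= k%:E * radial_norm m1 phihat)%E.
Proof.
move=> mm mm1 m_le; apply: le_Lnorm_EFin_scale => //; try exact: measurable_radial.
move=> xi; rewrite !normrM mulrA ler_wpM2r //; exact/m_le/eucl_norm_ge0.
Qed.

Lemma radial_norm_le_scaleD (m m1 m2 : R -> R) :
  measurable_fun setT (fun xi => m (eucl_norm xi)) ->
  measurable_fun setT (fun xi => m1 (eucl_norm xi)) ->
  measurable_fun setT (fun xi => m2 (eucl_norm xi)) ->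
  (forall r, 0 <= r -> `|m r| <= k * (`|m1 r| + `|m2 r|)) ->
  (radial_norm m phihat <= k%:E * (radial_norm m1 phihat + radial_norm m2 phihat))%E.
Proof.
move=> mm mm1 mm2 m_le.
apply: le_Lnorm_EFin_scaleD; rewrite ?ler1n //; try exact: measurable_radial.
move=> xi; rewrite !normrM -mulrDl mulrA ler_wpM2r //; exact/m_le/eucl_norm_ge0.
Qed.

End radial_weights.

Section weighted_norms.
Context {R : realType}.
Variables (sigma U M : R) (omega : R -> R) (phihat : R * R -> R).
Hypotheses (sigma_gt0 : 0 < sigma) (U_gt0 : 0 < U) (M_gt0 : 0 < M)
  (omega_gt0 : forall r, 0 <= r -> 0 < omega r)
  (omega_le : forall r, 0 <= r -> r <= 1 -> omega r <= U)
  (omega_ge : forall r, 0 <= r -> 1 <= M * (1 + r `^ sigma) * omega r)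
  (momega : measurable_fun setT (fun xi : R * R => omega (eucl_norm xi)))
  (mphihat : measurable_fun setT phihat).

Local Notation Hs := (hom_norm sigma omega phihat).
Local Notation Hsw := (inhom_norm sigma omega phihat).
Local Notation L2w := (L2w_norm omega phihat).
Local Notation L2 := (L2_norm phihat).

Let mhom : measurable_fun setT
  (fun xi : R * R => eucl_norm xi `^ sigma * omega (eucl_norm xi)).
Proof.
apply: measurable_funM => //.
exact: measurableT_comp (measurable_powR sigma) measurable_eucl_norm.
Qed.

Let minhom : measurable_fun setT
  (fun xi : R * R => (1 + eucl_norm xi ^+ 2) `^ (sigma / 2) * omega (eucl_norm xi)).
Proof.
apply: measurable_funM => //; apply: measurableT_comp (measurable_powR _) _.
by apply: measurable_funD => //; apply: measurable_funX; exact: measurable_eucl_norm.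
Qed.

Let U_ge0 : 0 <= U := ltW U_gt0.
Let M_ge0 : 0 <= M := ltW M_gt0.

Let omega_le_hom r : 0 <= r -> omega r <= U + r `^ sigma * omega r.
Proof.
move=> r_ge0; have w_ge0 := ltW (omega_gt0 r_ge0).
have [r_le1|r_gt1] := leP r 1.
  by rewrite (le_trans (omega_le r_ge0 r_le1)) // lerDl mulr_ge0 ?powR_ge0.
apply: ler_wpDl U_ge0 _.
by rewrite ler_peMl // powR_ge1 // ltW.
Qed.

Lemma L2w_norm_le : (L2w <= (1 + U)%:E * (Hs + L2))%E.
Proof.
rewrite L2w_normE L2_normE.
apply: (radial_norm_le_scaleD _ _ (m1 := fun r => r `^ sigma * omega r)) => //.
  by rewrite addr_ge0.
move=> r r_ge0; have w_ge0 := ltW (omega_gt0 r_ge0).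
have Pw_ge0 : 0 <= r `^ sigma * omega r by rewrite mulr_ge0 ?powR_ge0.
rewrite normr1 (ger0_norm w_ge0) (ger0_norm Pw_ge0).
have := omega_le_hom r_ge0; have := U_ge0; nra.
Qed.

Lemma L2_norm_le_hom_L2w : (L2 <= M%:E * (Hs + L2w))%E.
Proof.
rewrite L2w_normE L2_normE.
apply: (radial_norm_le_scaleD _ _ (m1 := fun r => r `^ sigma * omega r)) => //.
move=> r r_ge0; have w_ge0 := ltW (omega_gt0 r_ge0).
have Pw_ge0 : 0 <= r `^ sigma * omega r by rewrite mulr_ge0 ?powR_ge0.
rewrite normr1 (ger0_norm w_ge0) (ger0_norm Pw_ge0) (le_trans (omega_ge r_ge0)) //.
by rewrite -mulrA mulrDl mul1r addrC.
Qed.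

Lemma inhom_norm_le : (Hsw <= (2 `^ (sigma / 2) * (2 + U))%:E * (Hs + L2))%E.
Proof.
rewrite L2_normE.
apply: (radial_norm_le_scaleD _ _
  (m := fun r => (1 + r ^+ 2) `^ (sigma / 2) * omega r)
  (m1 := fun r => r `^ sigma * omega r)) => //.
  by rewrite mulr_ge0 ?powR_ge0 ?addr_ge0.
move=> r r_ge0; have w_ge0 := ltW (omega_gt0 r_ge0).
have Pw_ge0 : 0 <= r `^ sigma * omega r by rewrite mulr_ge0 ?powR_ge0.
have Qw_ge0 : 0 <= (1 + r ^+ 2) `^ (sigma / 2) * omega r by rewrite mulr_ge0 ?powR_ge0.
have Q_le := powR_1Dsqr_le r_ge0 (ltW sigma_gt0).
rewrite normr1 (ger0_norm Qw_ge0) (ger0_norm Pw_ge0).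
rewrite (le_trans (ler_wpM2r w_ge0 Q_le)) // -!mulrA ler_wpM2l ?powR_ge0 //.
have := omega_le_hom r_ge0; have := U_ge0; nra.
Qed.

Lemma hom_norm_le_inhom : (Hs <= Hsw)%E.
Proof.
rewrite -[leRHS]mul1e.
apply: (radial_norm_le_scale _ _ (m := fun r => r `^ sigma * omega r)
  (m1 := fun r => (1 + r ^+ 2) `^ (sigma / 2) * omega r)) => //.
move=> r r_ge0; have w_ge0 := ltW (omega_gt0 r_ge0).
rewrite mul1r !ger0_norm ?mulr_ge0 ?powR_ge0 // ler_wpM2r //.
exact: powR_le_powR_1Dsqr r_ge0 (ltW sigma_gt0).
Qed.

Lemma L2_norm_le_inhom : (L2 <= (2 * M)%:E * Hsw)%E.
Proof.
rewrite L2_normE.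
apply: (radial_norm_le_scale _ _
  (m1 := fun r => (1 + r ^+ 2) `^ (sigma / 2) * omega r)) => //.
  by rewrite mulr_ge0.
move=> r r_ge0; have w_ge0 := ltW (omega_gt0 r_ge0).
have P_le := powR_le_powR_1Dsqr r_ge0 (ltW sigma_gt0).
have Q_ge1 := powR_1Dsqr_ge1 r (ltW sigma_gt0).
rewrite normr1 ger0_norm ?mulr_ge0 ?powR_ge0 // (le_trans (omega_ge r_ge0)) //.
rewrite -mulrA [2 * M]mulrC -mulrA ler_wpM2l // mulrA ler_wpM2r //.
by rewrite mulr_natl mulr2n lerD.
Qed.

Lemma weighted_norm_equivalences :
  [/\ (cap_norm Hs L2w <= (2 + U)%:E * (Hs + L2))%E,
      (Hs + L2 <= (2 * (1 + M))%:E * cap_norm Hs L2w)%E,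
      (Hsw <= (2 `^ (sigma / 2) * (2 + U))%:E * (Hs + L2))%E &
      (Hs + L2 <= (1 + 2 * M)%:E * Hsw)%E].
Proof.
have [Hs_ge0 Hsw_ge0 L2w_ge0 L2_ge0] :
    [/\ (0 <= Hs)%E, (0 <= Hsw)%E, (0 <= L2w)%E & (0 <= L2)%E].
  by split; exact: Lnorm_ge0.
split; last 2 first.
- exact: inhom_norm_le.
- apply: leeD_scale; rewrite ?mulr_ge0 //.
    exact: hom_norm_le_inhom.
  exact: L2_norm_le_inhom.
- apply: (le_trans (cap_norm_le_add Hs_ge0 L2w_ge0)).
  have -> : 2 + U = 1 + (1 + U) by rewrite addrA.
  apply: leeD_scale; rewrite ?addr_ge0 ?adde_ge0 ?leeDl //; exact: L2w_norm_le.
have HsL2w_le := add_le_cap_norm Hs_ge0 L2w_ge0.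
rewrite EFinM (muleC 2%:E) -muleA.
apply: (le_trans _ (lee_wpmul2l _ HsL2w_le)); last by rewrite lee_fin addr_ge0.
apply: leeD_scale; rewrite ?adde_ge0 ?leeDl //; exact: L2_norm_le_hom_L2w.
Qed.

End weighted_norms.

Unset Implicit Arguments.

Theorem lemma6p2 (R : realType) (omega : R -> R) (sigma : R) :
  in_MW omega -> 0 < sigma ->
  exists c C : R, [/\ 0 < c, 0 < C &
    forall phihat : R * R -> R, measurable_fun setT phihat ->
      [/\ (c^-1%:E * cap_norm (hom_norm sigma omega phihat) (L2w_norm omega phihat)
             <= hom_norm sigma omega phihat + L2_norm phihat)%E,
          (hom_norm sigma omega phihat + L2_norm phihat
             <= c%:E * cap_norm (hom_norm sigma omega phihat) (L2w_norm omega phihat))%E,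
          (C^-1%:E * inhom_norm sigma omega phihat
             <= hom_norm sigma omega phihat + L2_norm phihat)%E &
          (hom_norm sigma omega phihat + L2_norm phihat
             <= C%:E * inhom_norm sigma omega phihat)%E]].
Proof.
move=> omega_MW sigma_gt0.
have [U U_gt0 omega_le] := in_MW_bounded omega_MW.
have [M M_gt0 omega_ge] := in_MW_ge_inv_powR omega_MW sigma_gt0.
have omega_gt0 := in_MW_gt0 omega_MW.
have momega := in_MW_measurable_comp omega_MW measurable_eucl_norm (@eucl_norm_ge0 R).
pose c := Num.max (2 + U) (2 * (1 + M)).
pose C := Num.max (2 `^ (sigma / 2) * (2 + U)) (1 + 2 * M).
have c_gt0 : 0 < c by rewrite lt_max addr_gt0.
have C_gt0 : 0 < C.
  by rewrite lt_max; apply/orP; right; apply: addr_gt0 => //; exact: mulr_gt0.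
exists c, C; split => // phihat mphihat.
have [cap_le HsL2_le_cap inhom_le HsL2_le_inhom] := weighted_norm_equivalences
  sigma_gt0 U_gt0 M_gt0 omega_gt0 omega_le omega_ge momega mphihat.
have HsL2_ge0 : (0 <= hom_norm sigma omega phihat + L2_norm phihat)%E.
  by apply: adde_ge0; exact: Lnorm_ge0.
have cap_ge0 : (0 <= cap_norm (hom_norm sigma omega phihat) (L2w_norm omega phihat))%E.
  exact: poweR_ge0.
have inhom_ge0 : (0 <= inhom_norm sigma omega phihat)%E by exact: Lnorm_ge0.
rewrite !lee_pdivrMl //; split.
- by apply: (lee_scale_trans cap_le); rewrite // le_max lexx.
- by apply: (lee_scale_trans HsL2_le_cap); rewrite // le_max lexx orbT.
- by apply: (lee_scale_trans inhom_le); rewrite // le_max lexx.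
- by apply: (lee_scale_trans HsL2_le_inhom); rewrite // le_max lexx orbT.
Qed.
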